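(* For $\lambda,\mu\in\Lambda$ we have $\lambda\leq\mu$ in the Bruhat order if and only if $$\sum_{\substack{1\le i\le n_1+\cdots+n_k\\(\lambda+\rho,\delta_i)\le h}}(-1)^{p_i}\;\geq\sum_{\substack{1\le i\le n_1+\cdots+n_k\\(\mu+\rho,\delta_i)\le h}}(-1)^{p_i}$$ for all $h\in\mathbb{Z}$ and $1\leq k\leq l$, with equality whenever $k=l$.
   Context: Let $(\underline{n},\underline{c})\in\mathbb{N}^l\times\{0,1\}^l$ and $\mathfrak{g}=\mathfrak{gl}(U)$ for the superspace $U=U_1\oplus\cdots\oplus U_l$, $U_i$ of dimension $n_i$ in parity $\bar c_i$, over an algebraically closed field of characteristic $0$. Homogeneous basis $u_1,\dots,u_{m+n}$ ($m+n=\sum n_i$) concatenating bases of $U_1,\dots,U_l$; $p_i$ the parity of $u_i$; $\delta_i$ the standard basis of $\mathfrak{t}^*$ dual to the diagonal matrix units, $(\delta_i,\delta_j)=(-1)^{p_i}\delta_{ij}$; $\rho=-\sum_{i<j}(-1)^{p_i+p_j}\delta_j-\sum_{p_i=\bar1}\delta_i$; $\mathfrak{t}^*_{\mathbb{Z}}=\bigoplus\mathbb{Z}\delta_i$. Bruhat order: $\lambda\leq\mu$ iff for all $h\in\mathbb{Z}$ and $1\le j\le m+n$, $\sum_{1\le i\le j,\,(\lambda+\rho,\delta_i)\le h}(-1)^{p_i}\geq\sum_{1\le i\le j,\,(\mu+\rho,\delta_i)\le h}(-1)^{p_i}$, with equality when $j=m+n$. $\Lambda:=\{\lambda\in\mathfrak{t}^*_{\mathbb{Z}}:(-1)^{c_k}(\lambda+\rho,\delta_i-\delta_{i+1})>0$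 for all $1\le k\le l$ and $n_1+\cdots+n_{k-1}<i<n_1+\cdots+n_k\}$. *)

From mathcomp Require Import all_boot all_order all_algebra.
Set Implicit Arguments. Unset Strict Implicit. Unset Printing Implicit Defensive.
Import Order.TTheory GRing.Theory Num.Theory.
Local Open Scope ring_scope.

(* Data: l blocks; block k (0-indexed, k < l) has dimension n k and parity c k.
   Positions (basis vectors u_1..u_{m+n}) are 0-indexed: position i (0-indexed)
   corresponds to the paper's index i+1. *)

Definition S (n : nat -> nat) (k : nat) : nat := (\sum_(j < k) n j)%N.

Definition par (l : nat) (n : nat -> nat) (c : nat -> bool) (i : nat) : bool :=
  [exists k : 'I_l, (S n k <= i < S n k.+1)%N && c k].

Definition sgn (b : bool) : int := (-1) ^+ b.

Definition rho (l : nat) (n : nat -> nat) (c : nat -> bool) (j : nat) : int :=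
  - (\sum_(i < j) sgn (par l n c i) * sgn (par l n c j)) - ((par l n c j : nat)%:Z).

(* Weights lambda = sum_i lam_i delta_i in t*_Z, m+n = S n l. *)
Definition weight (l : nat) (n : nat -> nat) := 'I_(S n l) -> int.

(* (lambda + rho, delta_i) = (-1)^{p_i} (lam_i + rho_i). *)
Definition pair_rho (l : nat) (n : nat -> nat) (c : nat -> bool)
  (lam : weight l n) (i : 'I_(S n l)) : int :=
  sgn (par l n c i) * (lam i + rho l n c i).

(* sum over paper indices 1 <= i <= j with (lambda+rho, delta_i) <= h of (-1)^{p_i} *)
Definition cnt (l : nat) (n : nat -> nat) (c : nat -> bool)
  (lam : weight l n) (h : int) (j : nat) : int :=
  \sum_(i < S n l | ((i < j)%N && (pair_rho c lam i <= h))) sgn (par l n c i).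

Definition bruhat_le (l : nat) (n : nat -> nat) (c : nat -> bool)
  (lam mu : weight l n) : Prop :=
  (forall (h : int) (j : nat), (1 <= j <= S n l)%N -> cnt c mu h j <= cnt c lam h j)
  /\ (forall h : int, cnt c lam h (S n l) = cnt c mu h (S n l)).

Definition inLambda (l : nat) (n : nat -> nat) (c : nat -> bool) (lam : weight l n) : Prop :=
  forall (k : 'I_l) (i j : 'I_(S n l)), val j = (val i).+1 ->
    (S n k < j < S n k.+1)%N ->
    0 < sgn (c k) * (pair_rho c lam i - pair_rho c lam j).

From mathcomp Require Import all_boot all_order all_algebra zify.
Import Order.TTheory GRing.Theory Num.Theory.
Local Open Scope ring_scope.

(* Write D(j) for cnt lam h j - cnt mu h j.  Inside a block both lam + rho and
   mu + rho are strictly monotone, so the positions of the block where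
   (lam + rho, delta_i) <= h form an initial or a final segment of the block, and
   likewise for mu, with the same orientation.  Hence all increments of D inside a
   block have the same sign, D is monotone on each block, and D >= 0 at the block
   boundaries forces D >= 0 everywhere. *)

Set Implicit Arguments. Unset Strict Implicit.

Lemma S_recr (n : nat -> nat) k : S n k.+1 = (S n k + n k)%N.
Proof. by rewrite /S big_ord_recr. Qed.

Lemma leq_S (n : nat -> nat) a b : (a <= b)%N -> (S n a <= S n b)%N.
Proof.
move=> /subnKC <-; elim: (b - a)%N => [|d IH]; first by rewrite addn0.
by rewrite addnS S_recr; apply: leq_trans IH (leq_addr _ _).
Qed.

Lemma S_bracket (n : nat -> nat) L j : (0 < L)%N -> (j <= S n L)%N ->
  exists2 k, (k < L)%N & (S n k <= j <= S n k.+1)%N.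
Proof.
elim: L => [|[|L] IH] // _ hj.
  by exists 0%N => //; rewrite /S big_ord0.
have [hjL | hLj] := leqP j (S n L.+1); last by exists L.+1 => //; rewrite hj ltnW.
by have [k hk hjk] := IH isT hjL; exists k => //; apply: ltnW.
Qed.

Lemma par_block l (n : nat -> nat) c (k : 'I_l) i :
  (S n k <= i < S n k.+1)%N -> par l n c i = c k.
Proof.
move=> /andP[ki ik]; apply/existsP/idP => [[k' /andP[/andP[k'i ik'] ck']] | ck].
  suff -> : k = k' by [].
  apply/val_inj/eqP; rewrite eqn_leq.
  by apply/andP; split; rewrite leqNgt; apply/negP => /(leq_S n) /=; lia.
by exists k; rewrite ki ik ck.
Qed.

Section BlockMonotonicity.

Variables (l : nat) (n : nat -> nat) (c : nat -> bool).
Implicit Types (lam mu : weight l n) (k : 'I_l) (i j : 'I_(S n l)).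

Lemma pair_rho_block_mono lam k i j : inLambda c lam ->
  (S n k <= i)%N -> (i < j)%N -> (j < S n k.+1)%N ->
  0 < sgn (c k) * (pair_rho c lam i - pair_rho c lam j).
Proof.
move=> Hlam ki ij jk.
have [d ej] : exists d, (j : nat) = (i + d.+1)%N by exists (j - i.+1)%N; lia.
elim: d j ej jk {ij} => [|d IH] j ej jk.
  by apply: (Hlam k i j) => /=; lia.
have jm : (i + d.+1 < S n l)%N by have := ltn_ord j; lia.
pose m := Ordinal jm.
rewrite -(subrK (pair_rho c lam m) (pair_rho c lam i)) -addrA mulrDr addr_gt0 //.
  by apply: IH => //=; lia.
by apply: (Hlam k m j) => /=; lia.
Qed.

Definition cnt_diff_term lam mu (h : int) i : int :=
  sgn (par l n c i) *
  ((if pair_rho c lam i <= h then 1 else 0) - (if pair_rho c mu i <= h then 1 else 0)).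

Lemma cnt_subE lam mu h (j : nat) :
  cnt c lam h j - cnt c mu h j = \sum_(i < S n l | (i < j)%N) cnt_diff_term lam mu h i.
Proof.
rewrite /cnt !big_mkcondr -sumrB; apply: eq_bigr => i _.
by rewrite /cnt_diff_term mulrBr; case: ifP; case: ifP; rewrite ?mulr1 ?mulr0.
Qed.

Lemma cnt_diff_term_block_sign lam mu h k i j :
  inLambda c lam -> inLambda c mu ->
  (S n k <= i < S n k.+1)%N -> (S n k <= j < S n k.+1)%N ->
  0 <= cnt_diff_term lam mu h i * cnt_diff_term lam mu h j.
Proof.
move=> Hlam Hmu bi bj.
wlog ij : i j bi bj / (i <= j)%N.
  by move=> hwlog; case: (leqP i j) => [|/ltnW] ij; last rewrite mulrC; apply: hwlog.
rewrite /cnt_diff_term (par_block c bi) (par_block c bj).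
move: ij; rewrite leq_eqVlt => /orP[/eqP/val_inj -> | lt_ij]; first by rewrite -expr2 sqr_ge0.
case/andP: bi => ki _; case/andP: bj => _ jk.
move: (pair_rho_block_mono Hlam ki lt_ij jk) (pair_rho_block_mono Hmu ki lt_ij jk).
case: (c k); rewrite /sgn /= ?expr0 ?expr1 ?mul1r ?mulN1r;
  do 4 case: ifP; lia.
Qed.

Lemma sum_cnt_diff_split lam mu h (a b : nat) : (a <= b)%N ->
  \sum_(i < S n l | (i < b)%N) cnt_diff_term lam mu h i =
  \sum_(i < S n l | (i < a)%N) cnt_diff_term lam mu h i +
  \sum_(i < S n l | (a <= i < b)%N) cnt_diff_term lam mu h i.
Proof.
move=> ab; rewrite (bigID (fun i : 'I_(S n l) => (i < a)%N)) /=.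
by congr (_ + _); apply: eq_bigl => i; apply/idP/idP; lia.
Qed.

Lemma cnt_diff_term_block_uniform lam mu h k : inLambda c lam -> inLambda c mu ->
  (forall i, (S n k <= i < S n k.+1)%N -> 0 <= cnt_diff_term lam mu h i) \/
  (forall i, (S n k <= i < S n k.+1)%N -> cnt_diff_term lam mu h i <= 0).
Proof.
move=> Hlam Hmu.
have [[j /andP[bj neg_j]] | /existsPn all_ge0] :=
  altP (existsP (P := fun j => (S n k <= j < S n k.+1)%N && (cnt_diff_term lam mu h j < 0))).
- right=> i bi; have := cnt_diff_term_block_sign h Hlam Hmu bi bj.
  by rewrite nmulr_lge0.
- by left=> i bi; move: (all_ge0 i); rewrite bi /= -leNgt.
Qed.

Lemma cnt_le_in_block lam mu h k (j : nat) : inLambda c lam -> inLambda c mu ->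
  (S n k <= j <= S n k.+1)%N ->
  cnt c mu h (S n k) <= cnt c lam h (S n k) ->
  cnt c mu h (S n k.+1) <= cnt c lam h (S n k.+1) ->
  cnt c mu h j <= cnt c lam h j.
Proof.
move=> Hlam Hmu /andP[kj jk]; rewrite -!(subr_ge0 (cnt c mu h _)) !cnt_subE => Dk Dk1.
have [all_ge0 | all_le0] := cnt_diff_term_block_uniform h k Hlam Hmu.
- rewrite (sum_cnt_diff_split _ _ _ kj) addr_ge0 //.
  by apply: sumr_ge0 => i /andP[ki ij]; apply: all_ge0; rewrite ki (leq_trans ij).
- apply: le_trans Dk1 _; rewrite (sum_cnt_diff_split _ _ _ jk) gerDl.
  by apply: sumr_le0 => i /andP[ji ik]; apply: all_le0; rewrite ik (leq_trans kj).
Qed.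

End BlockMonotonicity.

Lemma cnt0 l (n : nat -> nat) c (lam : weight l n) h : cnt c lam h 0 = 0.
Proof. by rewrite /cnt big_pred0 // => i; rewrite ltn0. Qed.

Theorem lemma3p9 (l : nat) (n : nat -> nat) (c : nat -> bool) (lam mu : weight l n) :
  inLambda c lam -> inLambda c mu ->
  (bruhat_le c lam mu <->
   ((forall (h : int) (k : nat), (1 <= k <= l)%N ->
       cnt c mu h (S n k) <= cnt c lam h (S n k))
    /\ (forall h : int, cnt c lam h (S n l) = cnt c mu h (S n l)))).
Proof.
move=> Hlam Hmu; split=> [[Hle Heq] | [Hle Heq]]; split=> // h.
  move=> k /andP[k1 kl]; have [-> | Sk] := posnP (S n k); first by rewrite !cnt0.
  by apply: Hle; rewrite Sk leq_S.
have Hbound k : (k <= l)%N -> cnt c mu h (S n k) <= cnt c lam h (S n k).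
  by case: k => [|k] kl; [rewrite /S big_ord0 !cnt0 | apply: Hle].
move=> j /andP[j1 jl].
have l0 : (0 < l)%N.
  by case: l {Hlam Hmu lam mu Hle Heq Hbound} jl => [|//]; rewrite /S big_ord0; lia.
have [k kl bj] := S_bracket l0 jl.
by apply: (cnt_le_in_block (k := Ordinal kl)) => //; apply: Hbound => /=; lia.
Qed.
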